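(* Let $X$ be a proper geodesic metric space with base point $o$, and let $\epsilon\in(0,1)$. Let $\beta$ be a geodesic ray with $\beta(0)=o$ and let $\gamma$ be a $(q,Q)$-ray. Suppose there is an increasing sequence $r_1<r_2<\cdots$ with $r_n\to\infty$ such that $d(\beta(r_n),\gamma)\le\epsilon r_n$ for every $n$. Then $\gamma$ can be $(9q,Q)$-quasi-redirected to $\beta$.
   Context: A $(q,Q)$-quasi-geodesic satisfies $\frac{|s-t|}{q}-Q\le d(\alpha(s),\alpha(t))\le q|s-t|+Q$; a $(q,Q)$-ray is a $(q,Q)$-quasi-geodesic ray $\alpha\colon[0,\infty)\to X$ with $\alpha(0)=o$. A ray $\gamma'$ eventually coincides with $\beta$ if there are $t_\beta,t_{\gamma'}>0$ with $\gamma'(t)=\beta(t+t_\beta)$ for $t\ge t_{\gamma'}$. The ray $\gamma$ can be $(q',Q')$-quasi-redirected to $\beta$ if for every $r>0$ there is a $(q',Q')$-ray $\gamma'$ that coincides with $\gamma$ inside the closed ball of radius $r$ about $o$ (until $\gamma$ first leaves it) and eventually coincides with $\beta$. *)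

From Stdlib Require Import Reals Lra List.
Open Scope R_scope.

Record is_metric {X : Type} (d : X -> X -> R) : Prop := {
  metric_eq0 : forall x y, d x y = 0 <-> x = y;
  metric_sym : forall x y, d x y = d y x;
  metric_tri : forall x y z, d x z <= d x y + d y z
}.

Definition open_set {X : Type} (d : X -> X -> R) (U : X -> Prop) : Prop :=
  forall x, U x -> exists e, 0 < e /\ forall y, d x y < e -> U y.

Definition compact_set {X : Type} (d : X -> X -> R) (K : X -> Prop) : Prop :=
  forall (I : Type) (U : I -> X -> Prop),
    (forall i, open_set d (U i)) ->
    (forall x, K x -> exists i, U i x) ->
    exists l : list I, forall x, K x -> exists i, In i l /\ U i x.

Definition closed_ball {X : Type} (d : X -> X -> R) (x : X) (r : R) : X -> Prop :=
  fun y => d x y <= r.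

Definition proper_space {X : Type} (d : X -> X -> R) : Prop :=
  forall x r, compact_set d (closed_ball d x r).

Definition geodesic_space {X : Type} (d : X -> X -> R) : Prop :=
  forall x y, exists c : R -> X, c 0 = x /\ c (d x y) = y /\
    forall s t, 0 <= s <= d x y -> 0 <= t <= d x y -> d (c s) (c t) = Rabs (s - t).

(* Rays are functions R -> X, only their values on [0, oo) matter. *)
Definition geodesic_ray {X : Type} (d : X -> X -> R) (o : X) (b : R -> X) : Prop :=
  b 0 = o /\ forall s t, 0 <= s -> 0 <= t -> d (b s) (b t) = Rabs (s - t).

Definition quasi_geodesic_ray {X : Type} (d : X -> X -> R) (o : X) (q Q : R)
    (a : R -> X) : Prop :=
  a 0 = o /\ forall s t, 0 <= s -> 0 <= t ->
    Rabs (s - t) / q - Q <= d (a s) (a t) <= q * Rabs (s - t) + Q.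

(* d(x, gamma) <= c, where d(x, gamma) = inf_{t >= 0} d(x, gamma t). *)
Definition dist_to_ray_le {X : Type} (d : X -> X -> R) (x : X) (g : R -> X) (c : R) : Prop :=
  forall delta, 0 < delta -> exists t, 0 <= t /\ d x (g t) < c + delta.

Definition eventually_coincides {X : Type} (g' b : R -> X) : Prop :=
  exists tb tg, 0 < tb /\ 0 < tg /\ forall t, tg <= t -> g' t = b (t + tb).

Definition coincides_in_ball {X : Type} (d : X -> X -> R) (o : X) (r : R)
    (g' g : R -> X) : Prop :=
  forall t, 0 <= t -> (forall s, 0 <= s <= t -> d o (g s) <= r) -> g' t = g t.

Definition quasi_redirected {X : Type} (d : X -> X -> R) (o : X) (q' Q' : R)
    (g b : R -> X) : Prop :=
  forall r, 0 < r -> exists g' : R -> X,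
    quasi_geodesic_ray d o q' Q' g' /\ coincides_in_ball d o r g' g /\
    eventually_coincides g' b.

(* Fix r > 0, a large R0 = r_n and t1 with d(beta R0, gamma t1) < eps R0 + 1. Let phi S be
   the distance from [beta S] to gamma restricted to [0, t1] and k = 2 / (1 + eps). Since
   phi S >= S - O(1), the function S - k phi S attains its maximum on [R0, oo) at some Sm,
   and maximality forces phi (Sm + v) >= phi Sm + v / k >= phi Sm + v / 2. Hence following
   gamma up to an (almost) closest point gamma t0, then a geodesic to [beta Sm], then beta,
   gives a (9q, Q)-quasi-geodesic ray; comparing with S = R0 shows that gamma t0 lies
   outside the ball of radius r, precisely because k eps < 1. *)

From Stdlib Require Import Reals Lra Classical.
Open Scope R_scope.

Lemma Rmax0_lipschitz (x y : R) : Rabs (Rmax 0 x - Rmax 0 y) <= Rabs (x - y).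
Proof.
  unfold Rmax; destruct (Rle_dec 0 x), (Rle_dec 0 y);
    unfold Rabs; repeat destruct Rcase_abs; lra.
Qed.

Lemma lipschitz_continuity_pt (f : R -> R) (K : R) : 0 <= K ->
  (forall x y, Rabs (f x - f y) <= K * Rabs (x - y)) -> forall x, continuity_pt f x.
Proof.
  intros HK Hf x e He.
  exists (e / (K + 1)); split; [apply Rdiv_lt_0_compat; lra|].
  intros y [_ Hy]; simpl in *; unfold Rdist in *.
  assert (K * Rabs (y - x) <= K * (e / (K + 1))) by (apply Rmult_le_compat_l; lra).
  assert (K * (e / (K + 1)) < e).
  { apply Rmult_lt_reg_r with (K + 1); [lra|]. field_simplify; lra. }
  specialize (Hf y x); lra.
Qed.

Lemma ex_inf_on_interval (f : R -> R -> R) (a : R) : 0 <= a ->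
  (forall t S, 0 <= f t S) ->
  exists phi : R -> R, forall S,
    (forall t, 0 <= t <= a -> phi S <= f t S) /\
    (forall m, (forall t, 0 <= t <= a -> m <= f t S) -> m <= phi S).
Proof.
  intros Ha Hf.
  set (E := fun S x => exists t, 0 <= t <= a /\ x = - f t S).
  assert (Hbound : forall S, bound (E S)).
  { intros S; exists 0; intros x [t [_ ->]]; specialize (Hf t S); lra. }
  assert (Hne : forall S, exists x, E S x).
  { intros S; exists (- f 0 S), 0; split; [lra|reflexivity]. }
  exists (fun S => - proj1_sig (completeness (E S) (Hbound S) (Hne S))).
  intros S; destruct (completeness (E S) (Hbound S) (Hne S)) as [m [Hub Hlub]]; simpl.
  split.
  - intros t Ht.
    assert (Hm : - f t S <= m) by (apply Hub; exists t; split; [lra|reflexivity]).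
    lra.
  - intros m' Hm'.
    assert (m <= - m') by (apply Hlub; intros x [t [Ht ->]]; specialize (Hm' t Ht); lra).
    lra.
Qed.

Lemma ex_argmax_sub_scaled (phi : R -> R) (k M R0 : R) : 1 < k ->
  (forall S S', phi S <= phi S' + Rabs (S - S')) ->
  (forall S, R0 <= S -> S - M <= phi S) ->
  exists Sm, R0 <= Sm /\ forall S, R0 <= S -> S - k * phi S <= Sm - k * phi Sm.
Proof.
  intros Hk Hlip Hlow.
  set (psi := fun S => S - k * phi S).
  assert (psi_cont : forall S, continuity_pt psi S).
  { apply (lipschitz_continuity_pt psi (1 + k)); [lra|]; intros x y.
    pose proof (Hlip x y) as Hxy; pose proof (Hlip y x) as Hyx.
    pose proof (Rle_abs (x - y)) as Habs; pose proof (Rle_abs (y - x)) as Habs'.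
    rewrite Rabs_minus_sym in Hyx, Habs'.
    apply Rabs_le; unfold psi; split; nra. }
  (* beyond S1 the linear bound [psi S <= k M - (k - 1) S] drops below [psi R0] *)
  set (S1 := Rmax R0 ((k * M - psi R0) / (k - 1))).
  destruct (continuity_ab_maj psi R0 S1 (Rmax_l _ _) (fun c _ => psi_cont c))
    as [Sm [Hmax HSm]].
  exists Sm; split; [lra|]; intros S HS.
  destruct (Rle_dec S S1) as [HS1|HS1]; [apply Hmax; lra|].
  assert (HS1' : (k * M - psi R0) / (k - 1) <= S)
    by (pose proof (Rmax_r R0 ((k * M - psi R0) / (k - 1))) as Hr; fold S1 in Hr; lra).
  assert (Hmul : k * M - psi R0 <= (k - 1) * S).
  { replace (k * M - psi R0) with ((k - 1) * ((k * M - psi R0) / (k - 1))) by (field; lra).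
    apply Rmult_le_compat_l; lra. }
  pose proof (Hmax R0 (conj (Rle_refl _) (Rmax_l _ _))) as HmaxR0.
  assert (Hk_low : k * (S - M) <= k * phi S) by (apply Rmult_le_compat_l; [lra|auto]).
  unfold psi in *; lra.
Qed.

Definition glue {X : Type} (c : R -> X) (L Sm : R) (beta : R -> X) (a : R) : X :=
  if Rle_dec a L then c a else beta (Sm + (a - L)).

Definition splice {X : Type} (g : R -> X) (t0 : R) (h : R -> X) (t : R) : X :=
  if Rle_dec t t0 then g t else h (t - t0).

Lemma splice_coincides_in_ball {X : Type} (d : X -> X -> R) (o : X) (r t0 : R)
    (g h : R -> X) :
  0 <= t0 -> r < d o (g t0) -> coincides_in_ball d o r (splice g t0 h) g.
Proof.
  intros Ht0 Hout t Ht Hin; unfold splice.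
  destruct (Rle_dec t t0) as [Htt0|Htt0]; [reflexivity|].
  specialize (Hin t0 ltac:(lra)); lra.
Qed.

Section Metric.

Variables (X : Type) (d : X -> X -> R).
Hypothesis Hmetric : is_metric d.

Let dsym := metric_sym d Hmetric.
Let dtri := metric_tri d Hmetric.

Lemma dist_refl x : d x x = 0.
Proof. apply (metric_eq0 d Hmetric); reflexivity. Qed.

Lemma dist_ge0 x y : 0 <= d x y.
Proof. pose proof (dtri x y x) as Htri; rewrite dist_refl, (dsym y x) in Htri; lra. Qed.

Lemma dist_reverse_triangle x y z : Rabs (d x z - d y z) <= d x y.
Proof.
  pose proof (dtri x y z) as Hxy; pose proof (dtri y x z) as Hyx.
  rewrite (dsym y x) in Hyx; apply Rabs_le; lra.
Qed.

Section Glue.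

Variables (beta c : R -> X) (Sm L D Q : R).
Hypothesis Hbeta : forall s t, 0 <= s -> 0 <= t -> d (beta s) (beta t) = Rabs (s - t).
Hypothesis HSm : 0 <= Sm.
Hypothesis HL : 0 <= L.
Hypothesis HcL : c L = beta Sm.
Hypothesis Hc : forall s t, 0 <= s <= L -> 0 <= t <= L -> d (c s) (c t) = Rabs (s - t).
Hypothesis HQ : 0 <= Q.
Hypothesis HLD : L <= D + Q.
Hypothesis Hfar : forall v, 0 <= v -> D + v / 2 <= d (c 0) (beta (Sm + v)).

Local Notation P := (glue c L Sm beta).

Lemma dist_geodesic_to_ray a a' : 0 <= a <= L -> L < a' ->
  (a' - a) / 2 - Q <= d (c a) (beta (Sm + (a' - L))) <= a' - a.
Proof.
  intros Ha Ha'; split.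
  - pose proof (dtri (c 0) (c a) (beta (Sm + (a' - L)))) as Htri.
    rewrite Hc, Rabs_left1 in Htri by lra.
    pose proof (Hfar (a' - L) ltac:(lra)); lra.
  - pose proof (dtri (c a) (c L) (beta (Sm + (a' - L)))) as Htri.
    rewrite Hc, HcL, Hbeta, Rabs_left1, (Rabs_left1 (Sm - _)) in Htri by lra; lra.
Qed.

Lemma dist_glue a a' : 0 <= a -> 0 <= a' ->
  Rabs (a - a') / 2 - Q <= d (P a) (P a') <= Rabs (a - a').
Proof.
  intros Ha Ha'; pose proof (Rabs_pos (a - a')); unfold glue.
  destruct (Rle_dec a L), (Rle_dec a' L).
  - rewrite Hc by lra; lra.
  - rewrite Rabs_left1 by lra; pose proof (dist_geodesic_to_ray a a'); lra.
  - rewrite dsym, Rabs_right by lra; pose proof (dist_geodesic_to_ray a' a); lra.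
  - rewrite Hbeta by lra; replace (Sm + (a - L) - (Sm + (a' - L))) with (a - a') by ring.
    lra.
Qed.

Lemma dist_glue_far x a : (forall v, 0 <= v -> D + v / 2 <= d x (beta (Sm + v))) ->
  0 <= a -> a / 2 - Q <= d x (P a).
Proof.
  intros Hx Ha; unfold glue; destruct (Rle_dec a L).
  - pose proof (dtri x (c a) (c L)) as Htri; rewrite Hc, HcL, Rabs_left1 in Htri by lra.
    pose proof (Hx 0 (Rle_refl 0)) as Hx0; rewrite Rplus_0_r in Hx0; lra.
  - pose proof (Hx (a - L) ltac:(lra)); lra.
Qed.

End Glue.

Section Splice.

Variables (o : X) (gamma P : R -> X) (alpha : R -> R) (q Q t0 : R).
Hypothesis Hgamma : quasi_geodesic_ray d o q Q gamma.
Hypothesis Hq : 1 <= q.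
Hypothesis HQ : 0 <= Q.
Hypothesis Ht0 : 0 <= t0.
Hypothesis HP0 : P 0 = gamma t0.
Hypothesis HP : forall a a', 0 <= a -> 0 <= a' ->
  Rabs (a - a') / 2 - Q <= d (P a) (P a') <= Rabs (a - a').
Hypothesis HPfar : forall s a, 0 <= s <= t0 -> 0 <= a -> a / 2 - Q <= d (gamma s) (P a).
Hypothesis Halpha0 : alpha 0 = 0.
Hypothesis Halpha : forall u u', 0 <= u <= u' ->
  u' - u <= alpha u' - alpha u <= 2 * (u' - u).

Local Notation g' := (splice gamma t0 (fun u => P (alpha u))).

Lemma div_9q_bounds x : 0 <= x -> x / (9 * q) = x / q / 9 /\ 0 <= x / q <= x.
Proof.
  intros Hx; split; [field; lra|].
  split; [apply Rmult_le_pos; [lra|left; apply Rinv_0_lt_compat; lra]|].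
  apply Rmult_le_reg_r with q; [lra|]; field_simplify; nra.
Qed.

Lemma dist_gamma_ordered s t : 0 <= s <= t ->
  (t - s) / q - Q <= d (gamma s) (gamma t) <= q * (t - s) + Q.
Proof.
  intros Hst; destruct (proj2 Hgamma s t ltac:(lra) ltac:(lra)) as [H1 H2].
  rewrite Rabs_left1, Ropp_minus_distr in H1, H2 by lra; lra.
Qed.

Lemma dist_splice_mixed s t : 0 <= s <= t0 -> t0 < t ->
  (t - s) / (9 * q) - Q <= d (gamma s) (P (alpha (t - t0))) <= 9 * q * (t - s) + Q.
Proof.
  intros Hs Ht.
  pose proof (Halpha 0 (t - t0) ltac:(lra)) as Ha; rewrite Halpha0 in Ha.
  pose proof (HPfar s (alpha (t - t0)) Hs ltac:(lra)) as Hfar.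
  destruct (HP 0 (alpha (t - t0)) ltac:(lra) ltac:(lra)) as [_ Hup].
  rewrite HP0, Rabs_left1 in Hup by lra.
  pose proof (dist_gamma_ordered s t0 ltac:(lra)) as Hg.
  pose proof (dtri (gamma s) (gamma t0) (P (alpha (t - t0)))) as Htri1.
  pose proof (dtri (gamma s) (P (alpha (t - t0))) (gamma t0)) as Htri2.
  rewrite (dsym (P _) (gamma t0)) in Htri2.
  destruct (div_9q_bounds (t - t0) ltac:(lra)) as [_ Hu].
  destruct (div_9q_bounds (t0 - s) ltac:(lra)) as [_ Hx].
  replace ((t - s) / (9 * q)) with (((t0 - s) / q + (t - t0) / q) / 9) by (field; lra).
  assert (Hqu : t - t0 <= q * (t - t0)) by nra.
  assert (Hqx : 0 <= q * (t0 - s)) by nra.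
  (* the lower bound is the convex combination 3/4 * (a/2 - Q) + 1/4 * (x/q - Q - a) *)
  split; lra.
Qed.

Lemma dist_splice_ordered s t : 0 <= s <= t ->
  (t - s) / (9 * q) - Q <= d (g' s) (g' t) <= 9 * q * (t - s) + Q.
Proof.
  intros Hst; unfold splice.
  destruct (Rle_dec t t0), (Rle_dec s t0); try lra; [| apply dist_splice_mixed; lra |];
    destruct (div_9q_bounds (t - s) ltac:(lra)) as [-> Hts].
  - pose proof (dist_gamma_ordered s t Hst); split; nra.
  - pose proof (Halpha (s - t0) (t - t0) ltac:(lra)) as Hst_alpha.
    pose proof (Halpha 0 (s - t0) ltac:(lra)) as Hs_alpha; rewrite Halpha0 in Hs_alpha.
    destruct (HP (alpha (s - t0)) (alpha (t - t0)) ltac:(lra) ltac:(lra)) as [Hlow Hup].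
    rewrite Rabs_left1 in Hlow, Hup by lra; split; nra.
Qed.

Lemma splice_quasi_geodesic_ray : quasi_geodesic_ray d o (9 * q) Q g'.
Proof.
  split.
  - unfold splice; destruct (Rle_dec 0 t0); [exact (proj1 Hgamma)|lra].
  - intros s t Hs Ht; destruct (Rle_dec s t).
    + rewrite Rabs_left1, Ropp_minus_distr by lra; apply dist_splice_ordered; lra.
    + rewrite Rabs_right, dsym by lra; apply dist_splice_ordered; lra.
Qed.

End Splice.

Lemma ramp_speed (U u u' : R) : 0 <= u <= u' ->
  u' - u <= (u' + Rmin u' U) - (u + Rmin u U) <= 2 * (u' - u).
Proof. intros Hu; unfold Rmin; destruct (Rle_dec u U), (Rle_dec u' U); lra. Qed.

Section Rays.

Variables (o : X) (beta gamma : R -> X) (q Q : R).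
Hypothesis Hgeod : geodesic_space d.
Hypothesis Hbeta : geodesic_ray d o beta.
Hypothesis Hgamma : quasi_geodesic_ray d o q Q gamma.
Hypothesis Hq : 1 <= q.
Hypothesis HQ : 0 <= Q.

Lemma dist_origin_ray S : 0 <= S -> d o (beta S) = S.
Proof.
  intros HS; destruct Hbeta as [Hb0 Hb].
  rewrite <- Hb0 at 1; rewrite Hb, Rabs_left1 by lra; lra.
Qed.

Lemma dist_ray_segment_lower t1 S t : 0 <= S -> 0 <= t <= t1 ->
  S - (q * t1 + Q) <= d (gamma t) (beta S).
Proof.
  intros HS Ht; pose proof (dtri o (gamma t) (beta S)) as Htri.
  rewrite dist_origin_ray in Htri by lra.
  destruct Hgamma as [Hg0 Hg]; destruct (Hg 0 t ltac:(lra) ltac:(lra)) as [_ Hup].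
  rewrite Hg0, Rabs_left1 in Hup by lra; nra.
Qed.

Lemma ex_inf_dist_segment t1 : 0 <= t1 ->
  exists phi : R -> R,
    (forall S t, 0 <= S -> 0 <= t <= t1 -> phi S <= d (gamma t) (beta S)) /\
    (forall S m, 0 <= S -> (forall t, 0 <= t <= t1 -> m <= d (gamma t) (beta S)) ->
       m <= phi S) /\
    (forall S S', phi S <= phi S' + Rabs (S - S')).
Proof.
  intros Ht1.
  (* clamping the parameters at 0 makes phi 1-Lipschitz on all of R *)
  destruct (ex_inf_on_interval (fun t S => d (gamma (Rmax 0 t)) (beta (Rmax 0 S))) t1 Ht1
              (fun t S => dist_ge0 _ _)) as [phi Hphi].
  assert (Hclamp : forall x, 0 <= x -> Rmax 0 x = x) by (intros; apply Rmax_right; lra).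
  exists phi; split; [|split].
  - intros S t HS Ht; pose proof (proj1 (Hphi S) t Ht) as Hle.
    rewrite !Hclamp in Hle by lra; exact Hle.
  - intros S m HS Hm; apply Hphi; intros t Ht; rewrite !Hclamp by lra; auto.
  - intros S S'.
    enough (phi S - Rabs (S - S') <= phi S') by lra.
    apply Hphi; intros t Ht; pose proof (proj1 (Hphi S) t Ht) as Hle.
    pose proof (dtri (gamma (Rmax 0 t)) (beta (Rmax 0 S')) (beta (Rmax 0 S))) as Htri.
    rewrite (proj2 Hbeta) in Htri by apply Rmax_l.
    pose proof (Rmax0_lipschitz S' S) as Hclamp_lip.
    rewrite (Rabs_minus_sym S') in Hclamp_lip; lra.
Qed.

(* For Q = 0, gamma is q-Lipschitz, so the infimum is attained. *)
Lemma ex_almost_closest b t1 m : 0 <= t1 ->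
  (forall m', (forall t, 0 <= t <= t1 -> m' <= d (gamma t) b) -> m' <= m) ->
  exists t0, 0 <= t0 <= t1 /\ d (gamma t0) b <= m + Q.
Proof.
  intros Ht1 Hglb; destruct (Rle_lt_or_eq_dec 0 Q HQ) as [HQpos|HQ0].
  - apply NNPP; intros Hno.
    enough (m + Q <= m) by lra.
    apply Hglb; intros t Ht; apply Rnot_lt_le; intros Hlt; apply Hno.
    exists t; split; [exact Ht|lra].
  - set (f := fun t => d (gamma (Rmax 0 t)) b).
    assert (Hf : forall t, continuity_pt f t).
    { apply (lipschitz_continuity_pt f q); [lra|]; intros x y.
      eapply Rle_trans; [apply dist_reverse_triangle|].
      destruct (proj2 Hgamma (Rmax 0 x) (Rmax 0 y) (Rmax_l _ _) (Rmax_l _ _)) as [_ Hup].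
      pose proof (Rmax0_lipschitz x y); rewrite <- HQ0 in Hup; nra. }
    destruct (continuity_ab_min f 0 t1 Ht1 (fun c _ => Hf c)) as [t0 [Hmin Ht0]].
    exists t0; split; [exact Ht0|].
    assert (Hclamp : forall x, 0 <= x -> Rmax 0 x = x) by (intros; apply Rmax_right; lra).
    rewrite <- HQ0, Rplus_0_r, <- (Hclamp t0) by lra; apply Hglb.
    intros t Ht; rewrite <- (Hclamp t) by lra; apply Hmin, Ht.
Qed.

Lemma ex_escape_point t1 R0 k : 0 <= t1 -> 0 <= R0 -> 1 < k <= 2 ->
  exists Sm t0 D, R0 <= Sm /\ 0 <= t0 <= t1 /\ 0 <= D /\
    d (gamma t0) (beta Sm) <= D + Q /\
    (forall s v, 0 <= s <= t1 -> 0 <= v -> D + v / 2 <= d (gamma s) (beta (Sm + v))) /\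
    R0 - k * d (gamma t1) (beta R0) <= Sm - k * D.
Proof.
  intros Ht1 HR0 Hk.
  destruct (ex_inf_dist_segment t1 Ht1) as [phi [phi_le [phi_glb phi_lip]]].
  destruct (ex_argmax_sub_scaled phi k (q * t1 + Q) R0 ltac:(lra) phi_lip)
    as [Sm [HSm Hmax]].
  { intros S HS; apply phi_glb; [lra|]; intros t Ht.
    apply (dist_ray_segment_lower t1); lra. }
  assert (HSm0 : 0 <= Sm) by lra.
  destruct (ex_almost_closest (beta Sm) t1 (phi Sm) Ht1 (fun m => phi_glb Sm m HSm0))
    as [t0 [Ht0 Hclose]].
  exists Sm, t0, (phi Sm); split; [lra|split; [lra|split; [|split; [exact Hclose|split]]]].
  - apply phi_glb; [lra|]; intros; apply dist_ge0.
  - intros s v Hs Hv.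
    pose proof (Hmax (Sm + v) ltac:(lra)) as HmaxSv.
    pose proof (phi_le (Sm + v) s ltac:(lra) Hs); nra.
  - pose proof (Hmax R0 (Rle_refl _)) as HmaxR0.
    pose proof (phi_le R0 t1 HR0 ltac:(lra)); nra.
Qed.

Lemma quasi_redirect_from_escape r t0 Sm D : 0 <= t0 -> 0 <= Sm -> r < d o (gamma t0) ->
  d (gamma t0) (beta Sm) <= D + Q ->
  (forall s v, 0 <= s <= t0 -> 0 <= v -> D + v / 2 <= d (gamma s) (beta (Sm + v))) ->
  exists g', quasi_geodesic_ray d o (9 * q) Q g' /\ coincides_in_ball d o r g' gamma /\
    eventually_coincides g' beta.
Proof.
  intros Ht0 HSm Hout HLD Hfar.
  destruct (Hgeod (gamma t0) (beta Sm)) as [c [Hc0 [HcL Hc]]].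
  set (L := d (gamma t0) (beta Sm)) in *.
  assert (HL : 0 <= L) by apply dist_ge0.
  assert (Hfar0 : forall v, 0 <= v -> D + v / 2 <= d (c 0) (beta (Sm + v)))
    by (rewrite Hc0; intros; apply Hfar; lra).
  set (P := glue c L Sm beta).
  (* the ramp doubles the speed on [0, U], so the final shift along beta is Sm + 1 > 0 *)
  set (U := t0 + L + 1).
  exists (splice gamma t0 (fun u => P (u + Rmin u U))); split; [|split].
  - apply splice_quasi_geodesic_ray; auto.
    + unfold P, glue; destruct (Rle_dec 0 L); [exact Hc0|lra].
    + apply (dist_glue beta c Sm L D Q); auto; apply Hbeta.
    + intros s a Hs Ha; apply (dist_glue_far beta c Sm L D Q); auto; apply Hbeta.
    + rewrite Rmin_left; unfold U; lra.
    + intros u u' Hu; apply ramp_speed, Hu.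
  - apply splice_coincides_in_ball; assumption.
  - exists (Sm + 1), (t0 + U); split; [lra|split; [unfold U; lra|]].
    intros t Ht; unfold splice, P, glue, U in *.
    rewrite Rmin_right by lra.
    destruct (Rle_dec t t0), (Rle_dec (t - t0 + (t0 + L + 1)) L); try lra.
    f_equal; ring.
Qed.

End Rays.

End Metric.

Theorem mainTheorem4 (X : Type) (d : X -> X -> R) (o : X)
  (Hmetric : is_metric d) (Hproper : proper_space d) (Hgeod : geodesic_space d)
  (eps : R) (Heps : 0 < eps < 1)
  (q Q : R) (Hq : 1 <= q) (HQ : 0 <= Q)
  (beta gamma : R -> X)
  (Hbeta : geodesic_ray d o beta) (Hgamma : quasi_geodesic_ray d o q Q gamma)
  (r : nat -> R)
  (Hr0 : forall n, 0 <= r n)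
  (Hrinc : forall n, r n < r (S n))
  (Hrinf : forall M, exists N, forall n, (N <= n)%nat -> M <= r n)
  (Hclose : forall n, dist_to_ray_le d (beta (r n)) gamma (eps * r n)) :
  quasi_redirected d o (9 * q) Q gamma beta.
Proof.
  intros r0 Hr0pos.
  set (k := 2 / (1 + eps)).
  assert (Hkpos : 0 < k) by (apply Rdiv_lt_0_compat; lra).
  assert (Hkeps : k + k * eps = 2) by (unfold k; field; lra).
  assert (Hk : 1 < k <= 2) by (split; nra).
  clearbody k.
  destruct (Hrinf ((r0 + k + Q + 1) / (1 - k * eps))) as [N HN].
  specialize (HN N (le_n N)).
  destruct (Hclose N 1 Rlt_0_1) as [t1 [Ht1 Hnear]].
  rewrite (metric_sym d Hmetric) in Hnear.
  pose proof (Hr0 N) as HR0.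
  set (R0 := r N) in *; clearbody R0.
  assert (HR0big : r0 + k + Q + 1 <= R0 * (1 - k * eps)).
  { replace (r0 + k + Q + 1) with ((r0 + k + Q + 1) / (1 - k * eps) * (1 - k * eps))
      by (field; lra).
    apply Rmult_le_compat_r; lra. }
  destruct (ex_escape_point _ _ Hmetric _ _ _ _ _ Hbeta Hgamma Hq HQ t1 R0 k Ht1 HR0 Hk)
    as [Sm [t0 [D [HSm [Ht0 [HD [HLD [Hfar Hgain]]]]]]]].
  apply (quasi_redirect_from_escape _ _ Hmetric _ _ _ _ _ Hgeod Hbeta Hgamma Hq HQ
           r0 t0 Sm D); try lra.
  (* d(o, gamma t0) >= Sm - D - Q >= Sm - k D - Q >= R0 (1 - k eps) - k - Q > r0 *)
  - pose proof (metric_tri d Hmetric o (gamma t0) (beta Sm)) as Htri.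
    rewrite (dist_origin_ray _ _ _ _ Hbeta) in Htri by lra.
    assert (k * d (gamma t1) (beta R0) <= k * (eps * R0 + 1))
      by (apply Rmult_le_compat_l; lra).
    nra.
  - intros s v Hs Hv; apply Hfar; lra.
Qed.
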